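(* Let $\Phi$ be a channel matrix whose rows $P^1,\dots,P^4\in\Delta^n$ are in general position, let $Q^0$ be the equidistant point from $P^1,\dots,P^4$ with barycentric coordinate $\boldsymbol\lambda^0$, and suppose $\lambda^0_1<0$, $\lambda^0_2<0$, $\lambda^0_3\ge0$, $\lambda^0_4\ge0$. Let $Q^{1(1)}=\pi(Q^0|L(P^2,P^3,P^4))$ and $Q^{1(2)}=\pi(Q^0|L(P^1,P^3,P^4))$ with barycentric coordinates $\boldsymbol\lambda^{1(1)},\boldsymbol\lambda^{1(2)}$ about $P^1,\dots,P^4$, and suppose $\lambda^{1(2)}_1<0$. If moreover $\lambda^{1(1)}_2,\lambda^{1(1)}_3,\lambda^{1(1)}_4\ge0$, then the output distribution achieving the channel capacity is $Q^\ast=Q^{1(1)}$ and the channel capacity is $C=D(P^2\|Q^{1(1)})$.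
   Context: $\Delta^n=\{Q:Q_j>0,\sum_jQ_j=1\}$, $\bar\Delta^m=\{\boldsymbol\lambda:\lambda_i\ge0,\sum_i\lambda_i=1\}$; $D(Q\|Q')=\sum_jQ_j\log(Q_j/Q'_j)$. Rows are in general position if $P^2-P^1,\dots,P^m-P^1$ are linearly independent. $L(S^1,\dots,S^r)=\{\sum_i\lambda_iS^i:\sum_i\lambda_i=1\}\cap\Delta^n$; for such an affine subspace $L$, $\pi(Q'|L)$ is the unique $Q\in L$ minimizing $D(Q\|Q')$. The barycentric coordinate of $Q\in L(P^1,\dots,P^m)$ is the unique $\boldsymbol\lambda$ with $\sum_i\lambda_i=1$, $Q=\sum_i\lambda_iP^i$. The equidistant point is the unique $Q^0\in L(P^1,\dots,P^m)$ with all $D(P^i\|Q^0)$ equal. Mutual information $I(\boldsymbol\lambda,\Phi)=\sum_{i,j}\lambda_iP^i_j\log(P^i_j/Q_j)$ with $Q=\boldsymbol\lambda\Phi$; capacity $C=\max_{\boldsymbol\lambda\in\bar\Delta^m}I(\boldsymbol\lambda,\Phi)$; the capacity-achieving output distribution is $Q^\ast=\boldsymbol\lambda^\ast\Phi$ for a maximizer $\boldsymbol\lambda^\ast$ (unique). *)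

From mathcomp Require Import all_boot all_order all_algebra.
From mathcomp Require Import all_classical all_reals all_analysis.
Set Implicit Arguments. Unset Strict Implicit. Unset Printing Implicit Defensive.
Import Order.TTheory GRing.Theory Num.Theory.
Local Open Scope ring_scope.

Section Defs.
Variable R : realType.

Definition i1 : 'I_4 := @Ordinal 4 0 isT.
Definition i2 : 'I_4 := @Ordinal 4 1 isT.
Definition i3 : 'I_4 := @Ordinal 4 2 isT.
Definition i4 : 'I_4 := @Ordinal 4 3 isT.

Definition in_simplex n (Q : 'I_n -> R) : Prop :=
  (forall j, 0 < Q j) /\ \sum_j Q j = 1.

Definition in_csimplex m (l : 'I_m -> R) : Prop :=
  (forall i, 0 <= l i) /\ \sum_i l i = 1.

Definition KL n (Q Q' : 'I_n -> R) : R := \sum_j Q j * ln (Q j / Q' j).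

Definition general_position m n (P : 'I_m.+1 -> 'I_n -> R) : Prop :=
  forall a : 'I_m -> R,
    (forall j, \sum_(k < m) a k * (P (lift ord0 k) j - P ord0 j) = 0) ->
    forall k, a k = 0.

Definition comb m n (P : 'I_m -> 'I_n -> R) (l : 'I_m -> R) : 'I_n -> R :=
  fun j => \sum_i l i * P i j.

Definition Laff m n (P : 'I_m -> 'I_n -> R) (A : {set 'I_m}) (Q : 'I_n -> R) : Prop :=
  in_simplex Q /\
  exists l : 'I_m -> R, (forall i, i \notin A -> l i = 0) /\ \sum_i l i = 1 /\
     (forall j, Q j = comb P l j).

Definition is_proj n (L : ('I_n -> R) -> Prop) (Q' Q : 'I_n -> R) : Prop :=
  L Q /\ forall Q'', L Q'' -> KL Q Q' <= KL Q'' Q'.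

Definition barycentric m n (P : 'I_m -> 'I_n -> R) (Q : 'I_n -> R) (l : 'I_m -> R) : Prop :=
  \sum_i l i = 1 /\ forall j, Q j = comb P l j.

Definition equidistant m n (P : 'I_m -> 'I_n -> R) (Q0 : 'I_n -> R) : Prop :=
  Laff P [set: 'I_m]%SET Q0 /\ forall i k, KL (P i) Q0 = KL (P k) Q0.

Definition mutinf m n (P : 'I_m -> 'I_n -> R) (l : 'I_m -> R) : R :=
  \sum_i \sum_j l i * P i j * ln (P i j / comb P l j).

Definition capacity_achieving m n (P : 'I_m -> 'I_n -> R) (l : 'I_m -> R) : Prop :=
  in_csimplex l /\ forall mu, in_csimplex mu -> mutinf P mu <= mutinf P l.

End Defs.

(* The I-projection Q11 of Q0 onto L(P^2,P^3,P^4) satisfies the Pythagorean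
   identity D(P^i||Q0) = D(P^i||Q11) + D(Q11||Q0) for i = 2, 3, 4, so by
   equidistance these three rows lie at a common divergence C from Q11.
   Writing Q0 as the affine combination of the rows with weights lambda^0, the
   inequality D(Q0||Q11) >= 0 and lambda^0_1 < 0 force D(P^1||Q11) <= C.
   Since lambda^{1(1)} is a genuine input distribution with output Q11, the
   Kuhn-Tucker conditions hold, and the decomposition
   I(mu) = sum_i mu_i D(P^i||Q11) - D(mu Phi||Q11) shows that it achieves the
   capacity C and that every capacity-achieving input has output Q11. *)
From mathcomp Require Import all_boot all_order all_algebra.
From mathcomp Require Import all_classical all_reals all_analysis.
From mathcomp Require Import ring lra.
Import Order.TTheory GRing.Theory Num.Theory.
Local Open Scope ring_scope.
Set Implicit Arguments. Unset Strict Implicit. Unset Printing Implicit Defensive.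

Section ChannelCapacity.
Variable R : realType.
Implicit Types q t : R.

Lemma ln_le_subr1 (x : R) : 0 < x -> ln x <= x - 1.
Proof. by move=> x0; have := @le_ln1Dx R (x - 1); rewrite [1 + _]addrC subrK; apply; lra. Qed.

Lemma ln_lt_subr1 (x : R) : 0 < x -> x != 1 -> ln x < x - 1.
Proof.
move=> x0 x1; rewrite -ltr_expR lnK ?posrE //.
by have := @expR_gt1Dx R (x - 1); rewrite [1 + _]addrC subrK; apply; rewrite subr_eq0.
Qed.

Lemma subr_le_mul_ln_div q (q' : R) : 0 < q -> 0 < q' -> q - q' <= q * ln (q / q').
Proof.
move=> q0 q'0; have := ln_le_subr1 (divr_gt0 q'0 q0).
rewrite !ln_div ?posrE // => /(ler_wpM2l (ltW q0)).
have -> : q * (q' / q - 1) = q' - q by field; rewrite gt_eqF.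
lra.
Qed.

Lemma subr_lt_mul_ln_div q (q' : R) : 0 < q -> 0 < q' -> q != q' ->
  q - q' < q * ln (q / q').
Proof.
move=> q0 q'0 qq'; have : q' / q != 1.
  by apply: contra qq' => /eqP q'q; rewrite -(divfK (lt0r_neq0 q0) q') q'q mul1r.
move=> /(ln_lt_subr1 (divr_gt0 q'0 q0)); rewrite !ln_div ?posrE // -(ltr_pM2l q0).
have -> : q * (q' / q - 1) = q' - q by field; rewrite gt_eqF.
lra.
Qed.

Lemma KLxx n (Q : 'I_n -> R) : KL Q Q = 0.
Proof.
rewrite /KL big1 // => j _.
by have [->|Qj] := eqVneq (Q j) 0; rewrite ?mul0r // divff // ln1 mulr0.
Qed.

Lemma KL_ge0 n (Q Q' : 'I_n -> R) : (forall j, 0 < Q j) -> (forall j, 0 < Q' j) ->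
  \sum_j Q j = \sum_j Q' j -> 0 <= KL Q Q'.
Proof.
move=> HQ HQ' Hs; rewrite -(subrr (\sum_j Q' j)) -{1}Hs -sumrB.
by apply: ler_sum => j _; apply: subr_le_mul_ln_div.
Qed.

Lemma KL_ge0_simplex n (Q Q' : 'I_n -> R) : in_simplex Q -> in_simplex Q' -> 0 <= KL Q Q'.
Proof. by move=> [HQ sQ] [HQ' sQ']; apply: KL_ge0; rewrite // sQ sQ'. Qed.

Lemma KL_le0_eq n (Q Q' : 'I_n -> R) : (forall j, 0 < Q j) -> (forall j, 0 < Q' j) ->
  \sum_j Q j = \sum_j Q' j -> KL Q Q' <= 0 -> forall j, Q j = Q' j.
Proof.
move=> HQ HQ' Hs HKL k; apply/eqP/negPn/negP => Qk.
have gap j : 0 <= Q j * ln (Q j / Q' j) - (Q j - Q' j).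
  by rewrite subr_ge0 subr_le_mul_ln_div.
have gap0 : \sum_j (Q j * ln (Q j / Q' j) - (Q j - Q' j)) = 0.
  by apply/eqP; rewrite eq_le sumr_ge0 // andbT !sumrB Hs subrr subr0.
have /eqP := psumr_eq0P (fun j _ => gap j) gap0 (i := k) isT.
rewrite subr_eq0 => /eqP eqk.
by have := subr_lt_mul_ln_div (HQ k) (HQ' k) Qk; rewrite eqk ltxx.
Qed.

Lemma KL_subE n (Q Q0 Q' : 'I_n -> R) :
  (forall j, 0 < Q j) -> (forall j, 0 < Q0 j) -> (forall j, 0 < Q' j) ->
  KL Q Q0 - KL Q Q' = \sum_j Q j * ln (Q' j / Q0 j).
Proof.
move=> HQ HQ0 HQ'; rewrite -sumrB; apply: eq_bigr => j _.
by rewrite !ln_div ?posrE //; ring.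
Qed.

Lemma simplex_le1 n (Q : 'I_n -> R) j : in_simplex Q -> Q j <= 1.
Proof.
by move=> [Qpos <-]; rewrite (bigD1 j) //= lerDl sumr_ge0 // => k _; apply: ltW.
Qed.

Lemma simplex_lower_bound n (Q : 'I_n -> R) :
  in_simplex Q -> exists2 w, 0 < w & forall j, w <= Q j.
Proof.
move=> HQ; exists (\prod_j Q j); first by apply: prodr_gt0 => j _; apply: HQ.1.
move=> j; rewrite (bigD1 j) //= ler_piMr ?(ltW (HQ.1 j)) //.
by apply: prodr_ile1 => k _; rewrite ltW ?simplex_le1 //; apply: HQ.1.
Qed.

Lemma ge0_of_first_order a M w : 0 < w -> 0 <= M ->
  (forall t, 0 < t < w -> 0 <= t * a + t ^+ 2 * M) -> 0 <= a.
Proof.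
move=> w0 M0 H; rewrite leNgt; apply/negP => a0.
pose t := Num.min (w / 2) (- a / (M + 1)).
have M1 : 0 < M + 1 by lra.
have t0 : 0 < t by rewrite lt_min !divr_gt0 //; lra.
have tw : t < w by rewrite gt_min ltr_pdivrMr //; lra.
have tM : t * (M + 1) <= - a by rewrite -ler_pdivlMr // ge_min lexx orbT.
by have := H t; rewrite t0 tw => /(_ isT); nra.
Qed.

Lemma KL_perturb_le n (Q Q0 d : 'I_n -> R) t :
  (forall j, 0 < Q j) -> (forall j, 0 < Q0 j) -> (forall j, 0 < Q j + t * d j) ->
  \sum_j d j = 0 ->
  KL (fun j => Q j + t * d j) Q0 <=
    KL Q Q0 + t * \sum_j d j * ln (Q j / Q0 j) + t ^+ 2 * \sum_j d j ^+ 2 / Q j.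
Proof.
move=> HQ HQ0 HQt sd.
have term j : (Q j + t * d j) * ln ((Q j + t * d j) / Q0 j) <=
    Q j * ln (Q j / Q0 j) + t * (d j * ln (Q j / Q0 j)) + t * d j
    + t ^+ 2 * (d j ^+ 2 / Q j).
  have Qj := HQ j; have Q0j := HQ0 j; have Qtj := HQt j.
  have := ln_le_subr1 (divr_gt0 Qtj Qj).
  rewrite !ln_div ?posrE // => /(ler_wpM2l (ltW Qtj)).
  have -> : (Q j + t * d j) * ((Q j + t * d j) / Q j - 1) =
            t * d j + t ^+ 2 * (d j ^+ 2 / Q j) by field; rewrite gt_eqF.
  lra.
apply: le_trans (ler_sum _ (fun j _ => term j)) _.
by rewrite !big_split /= -!mulr_sumr sd mulr0 addr0.
Qed.

Section Combinations.
Variables (m n : nat) (P : 'I_m -> 'I_n -> R).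
Hypothesis HP : forall i, in_simplex (P i).

Lemma sum_comb_mul l (h : 'I_n -> R) :
  \sum_j comb P l j * h j = \sum_i l i * \sum_j P i j * h j.
Proof.
rewrite /comb; under eq_bigr do rewrite mulr_suml.
rewrite exchange_big /=; apply: eq_bigr => i _; rewrite mulr_sumr.
by apply: eq_bigr => j _; rewrite mulrA.
Qed.

Lemma sum_comb l : \sum_j comb P l j = \sum_i l i.
Proof.
rewrite /comb exchange_big /=; apply: eq_bigr => i _.
by rewrite -mulr_sumr (HP i).2 mulr1.
Qed.

Lemma comb_gt0 l : in_csimplex l -> forall j, 0 < comb P l j.
Proof.
move=> [l0 l1] j; have Pl0 i : true -> 0 <= l i * P i j.
  by move=> _; rewrite mulr_ge0 // ltW // (HP i).1.
rewrite lt_def sumr_ge0 // andbT; apply/eqP => /(psumr_eq0P Pl0) Pl.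
have l_eq0 i : l i = 0.
  by have /eqP := Pl i isT; rewrite mulf_eq0 (gt_eqF ((HP i).1 j)) orbF => /eqP.
by move: l1; rewrite big1 // => /eqP; rewrite eq_sym oner_eq0.
Qed.

Lemma sum_comb_KL_sub l (Q0 Q Q' : 'I_n -> R) :
  (forall j, 0 < Q0 j) -> (forall j, 0 < Q j) -> (forall j, 0 < Q' j) ->
  (forall j, comb P l j = Q' j) ->
  \sum_i l i * (KL (P i) Q0 - KL (P i) Q) = KL Q' Q0 - KL Q' Q.
Proof.
move=> HQ0 HQ HQ' lQ'.
under eq_bigr => i _ do rewrite (KL_subE (HP i).1 HQ0 HQ).
by rewrite -sum_comb_mul KL_subE //; apply: eq_bigr => j _; rewrite lQ'.
Qed.

Lemma mutinfE l : mutinf P l = \sum_i l i * KL (P i) (comb P l).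
Proof.
by apply: eq_bigr => i _; rewrite mulr_sumr; apply: eq_bigr => j _; rewrite mulrA.
Qed.

Lemma mutinf_KL_sub l (Q : 'I_n -> R) : in_csimplex l -> (forall j, 0 < Q j) ->
  mutinf P l = \sum_i l i * KL (P i) Q - KL (comb P l) Q.
Proof.
move=> hl HQ; have Hc := comb_gt0 hl.
have := sum_comb_KL_sub HQ Hc Hc (fun j => erefl); rewrite KLxx subr0 => <-.
by rewrite mutinfE -sumrB; apply: eq_bigr => i _; ring.
Qed.

Lemma capacity_achieving_of_KL_le l (Q : 'I_n -> R) C :
  in_csimplex l -> (forall j, comb P l j = Q j) ->
  (forall i, KL (P i) Q <= C) -> (forall i, 0 < l i -> KL (P i) Q = C) ->
  capacity_achieving P l /\
  forall mu, capacity_achieving P mu -> (forall j, comb P mu j = Q j) /\ mutinf P mu = C.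
Proof.
move=> hl lQ KL_le KL_eq.
have HQ j : 0 < Q j by rewrite -lQ comb_gt0.
have sumQ : \sum_j Q j = 1 by under eq_bigr do rewrite -lQ; rewrite sum_comb hl.2.
have KL_comb mu : in_csimplex mu -> 0 <= KL (comb P mu) Q.
  by move=> hmu; apply: KL_ge0 => //; [exact: comb_gt0 | rewrite sum_comb hmu.2].
have avg_le mu : in_csimplex mu -> \sum_i mu i * KL (P i) Q <= C.
  move=> [mu0 mu1]; rewrite -[leRHS]mul1r -mu1 mulr_suml.
  by apply: ler_sum => i _; rewrite ler_wpM2l.
have mutinf_le mu : in_csimplex mu -> mutinf P mu <= C.
  by move=> hmu; rewrite (mutinf_KL_sub hmu HQ); have := avg_le _ hmu; have := KL_comb _ hmu; lra.
have mutinf_l : mutinf P l = C.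
  rewrite (mutinf_KL_sub hl HQ) (_ : KL (comb P l) Q = 0); last first.
    by rewrite -(KLxx Q); apply: eq_bigr => j _; rewrite lQ.
  rewrite subr0 -[RHS]mul1r -hl.2 mulr_suml; apply: eq_bigr => i _.
  have [->|li0] := eqVneq (l i) 0; first by rewrite !mul0r.
  by rewrite KL_eq // lt_def li0 hl.1.
have cap_l : capacity_achieving P l by split=> // mu /mutinf_le; rewrite mutinf_l.
split=> // mu [hmu mu_max]; have mu_C : mutinf P mu = C.
  by apply/eqP; rewrite eq_le mutinf_le //= -mutinf_l mu_max.
split=> //; apply: KL_le0_eq => //; first exact: comb_gt0.
  by rewrite sum_comb hmu.2.
by move: mu_C; rewrite (mutinf_KL_sub hmu HQ); have := avg_le _ hmu; lra.
Qed.

End Combinations.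

Section Projection.
Variables (m n : nat) (P : 'I_m -> 'I_n -> R) (A : {set 'I_m}).
Hypothesis HP : forall i, in_simplex (P i).

Lemma Laff_perturb (Q : 'I_n -> R) i k t :
  Laff P A Q -> i \in A -> k \in A -> (forall j, 0 < Q j + t * (P i j - P k j)) ->
  Laff P A (fun j => Q j + t * (P i j - P k j)).
Proof.
move=> [[_ sumQ] [l [lA [ls lQ]]]] iA kA Qt_gt0.
have delta_sum (F : 'I_m -> R) (x : 'I_m) : \sum_y (y == x)%:R * F y = F x.
  rewrite (bigD1 x) //= eqxx mul1r big1 ?addr0 // => y /negbTE ->.
  by rewrite mul0r.
have delta_sum1 (x : 'I_m) : \sum_y ((y == x)%:R : R) = 1.
  by rewrite -[RHS](delta_sum (fun=> 1) x); apply: eq_bigr => y _; rewrite mulr1.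
split; first split=> //.
  by rewrite big_split /= -mulr_sumr sumrB (HP i).2 (HP k).2 subrr mulr0 addr0.
exists (fun x => l x + t * ((x == i)%:R - (x == k)%:R)); split; [|split].
- move=> x xA; rewrite lA //.
  have [xi xk] : (x == i) = false /\ (x == k) = false.
    by split; apply: contraNF xA => /eqP->.
  by rewrite xi xk subrr mulr0 addr0.
- by rewrite big_split /= ls -mulr_sumr sumrB !delta_sum1 subrr mulr0 addr0.
- move=> j; rewrite lQ /comb; under [RHS]eq_bigr do rewrite mulrDl -mulrA mulrBl.
  by rewrite big_split /= -mulr_sumr sumrB !delta_sum.
Qed.

(* Perturbing Q along P^i - P^k stays in L, so minimality of D(.||Q0) at Q makes
   the directional derivative sum_j (P^i_j - P^k_j) ln (Q_j / Q0_j) nonnegative. *)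
Lemma proj_KL_sub_le (Q0 Q : 'I_n -> R) i k :
  in_simplex Q0 -> is_proj (Laff P A) Q0 Q -> i \in A -> k \in A ->
  KL (P k) Q0 - KL (P k) Q <= KL (P i) Q0 - KL (P i) Q.
Proof.
move=> [HQ0 _] [QA Qmin] iA kA; have [[HQ _] _] := QA.
pose d j := P i j - P k j.
have sd : \sum_j d j = 0 by rewrite sumrB (HP i).2 (HP k).2 subrr.
have d_gt j : -1 < d j.
  by have := simplex_le1 j (HP k); have := (HP i).1 j; rewrite /d; lra.
rewrite -subr_ge0 (KL_subE (HP i).1 HQ0 HQ) (KL_subE (HP k).1 HQ0 HQ) -sumrB.
under eq_bigr do rewrite -mulrBl -/(d _).
have [w w0 wQ] := simplex_lower_bound QA.1.
have M0 : 0 <= \sum_j d j ^+ 2 / Q j.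
  by apply: sumr_ge0 => j _; rewrite divr_ge0 ?sqr_ge0 ?ltW.
apply: (ge0_of_first_order w0 M0) => t /andP[t0 tw].
have Qt_gt0 j : 0 < Q j + t * d j by have := wQ j; have := d_gt j; nra.
have := Qmin _ (Laff_perturb QA iA kA Qt_gt0).
have := KL_perturb_le HQ HQ0 Qt_gt0 sd.
lra.
Qed.

Lemma proj_pythagoras (Q0 Q : 'I_n -> R) i :
  in_simplex Q0 -> is_proj (Laff P A) Q0 Q -> i \in A ->
  KL (P i) Q0 = KL (P i) Q + KL Q Q0.
Proof.
move=> HQ0 hproj iA; have [[[HQ _] [l [lA [ls lQ]]]] _] := hproj.
pose e k := KL (P k) Q0 - KL (P k) Q.
have l_e k : l k * e k = l k * e i.
  have [kA|kA] := boolP (k \in A); last by rewrite lA // !mul0r.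
  by congr (_ * _); apply/eqP; rewrite eq_le !(proj_KL_sub_le HQ0 hproj).
have := sum_comb_KL_sub HP HQ0.1 HQ HQ (fun j => esym (lQ j)).
rewrite KLxx subr0 (eq_bigr _ (fun k _ => l_e k)) -mulr_suml ls mul1r /e.
lra.
Qed.

End Projection.

Lemma general_position_eq0 m n (P : 'I_m.+1 -> 'I_n -> R) (a : 'I_m.+1 -> R) :
  general_position P -> \sum_i a i = 0 -> (forall j, \sum_i a i * P i j = 0) ->
  forall i, a i = 0.
Proof.
move=> Hgp sa Pa; have sa' : \sum_(k < m) a (lift ord0 k) = - a ord0.
  by move: sa; rewrite big_ord_recl; lra.
have a_lift k : a (lift ord0 k) = 0.
  apply: (Hgp (fun k => a (lift ord0 k))) => j; under eq_bigr do rewrite mulrBr.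
  by rewrite sumrB -mulr_suml sa'; move: (Pa j); rewrite big_ord_recl; lra.
move=> i; have [k ->|->] := unliftP ord0 i; first exact: a_lift.
by move: sa'; rewrite big1 => [|k _]; [lra | exact: a_lift].
Qed.

Lemma barycentric_Laff_support m n (P : 'I_m.+1 -> 'I_n -> R) A (Q : 'I_n -> R) l i :
  general_position P -> Laff P A Q -> barycentric P Q l -> i \notin A -> l i = 0.
Proof.
move=> Hgp [_ [l' [l'A [l's l'Q]]]] [ls lQ] iA.
have := general_position_eq0 (a := fun k => l k - l' k) Hgp _ _ i.
rewrite l'A // subr0; apply; first by rewrite sumrB ls l's subrr.
move=> j; under eq_bigr do rewrite mulrBl.
by rewrite sumrB; move: (lQ j) (l'Q j); rewrite /comb => <- <-; rewrite subrr.
Qed.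

Lemma affine_neg_weight_ge m (l e : 'I_m -> R) i0 D :
  \sum_i l i = 1 -> \sum_i l i * e i <= 0 -> l i0 < 0 -> 0 <= D ->
  (forall i, i != i0 -> e i = D) -> D <= e i0.
Proof.
move=> ls le0 li0 D0 eD.
have rest : \sum_(i | i != i0) l i * e i = (1 - l i0) * D.
  rewrite (eq_bigr (fun i => l i * D)) => [|i /eD -> //].
  by rewrite -mulr_suml -ls [in RHS](bigD1 i0) //= addrC addrK.
by move: le0; rewrite (bigD1 i0) //= rest; nra.
Qed.

End ChannelCapacity.

Lemma ord4_neq1 (i : 'I_4) : i != i1 -> i \in [set i2; i3; i4]%SET.
Proof. by case: i => [[|[|[|[|?]]]] ?] //; rewrite !inE. Qed.

Unset Implicit Arguments. Set Strict Implicit.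

Theorem theorem20 (R : realType) (n : nat) (P : 'I_4 -> 'I_n -> R)
  (Q0 Q11 Q12 : 'I_n -> R) (l0 l11 l12 : 'I_4 -> R) :
  (forall i, in_simplex (P i)) ->
  general_position P ->
  equidistant P Q0 -> barycentric P Q0 l0 ->
  l0 i1 < 0 -> l0 i2 < 0 -> 0 <= l0 i3 -> 0 <= l0 i4 ->
  is_proj (Laff P [set i2; i3; i4]%SET) Q0 Q11 ->
  is_proj (Laff P [set i1; i3; i4]%SET) Q0 Q12 ->
  barycentric P Q11 l11 -> barycentric P Q12 l12 ->
  l12 i1 < 0 ->
  0 <= l11 i2 -> 0 <= l11 i3 -> 0 <= l11 i4 ->
  (exists l, capacity_achieving P l) /\
  (forall l, capacity_achieving P l ->
     (forall j, comb P l j = Q11 j) /\ mutinf P l = KL (P i2) Q11).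
Proof.
move=> HP Hgp [[HQ0 _] Heq] [l0s l0Q] l0_1 _ _ _ Hproj _ Hl11 _ _ l11_2 l11_3 l11_4.
have HQ11 := Hproj.1.1.
have l11_1 : l11 i1 = 0 by apply: (barycentric_Laff_support Hgp Hproj.1 Hl11); rewrite !inE.
pose e i := KL (P i) Q0 - KL (P i) Q11.
have e_eq i : i != i1 -> e i = KL Q11 Q0.
  by move/ord4_neq1 => iA; rewrite /e (proj_pythagoras HP HQ0 Hproj iA); ring.
have e_1 : KL Q11 Q0 <= e i1.
  apply: (affine_neg_weight_ge l0s _ l0_1 (KL_ge0_simplex HQ11 HQ0) e_eq).
  have := sum_comb_KL_sub HP HQ0.1 HQ11.1 HQ0.1 (fun j => esym (l0Q j)).
  by rewrite KLxx sub0r => ->; rewrite oppr_le0 KL_ge0_simplex.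
have KL_eq i : i != i1 -> KL (P i) Q11 = KL (P i2) Q11.
  by move=> i1i; move: (e_eq i i1i) (e_eq i2 isT) (Heq i i2); rewrite /e; lra.
have KL_le i : KL (P i) Q11 <= KL (P i2) Q11.
  have [->|/KL_eq-> //] := eqVneq i i1.
  by move: e_1 (e_eq i2 isT) (Heq i1 i2); rewrite /e; lra.
have l11_ge0 i : 0 <= l11 i.
  have [->|/ord4_neq1] := eqVneq i i1; first by rewrite l11_1.
  by rewrite !inE => /orP[/orP[]|] /eqP->.
have KKT i : 0 < l11 i -> KL (P i) Q11 = KL (P i2) Q11.
  by move=> li; apply: KL_eq; apply: contraTneq li => ->; rewrite l11_1 ltxx.
have [cap_l11 cap_Q11] := capacity_achieving_of_KL_le HP (conj l11_ge0 Hl11.1)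
  (fun j => esym (Hl11.2 j)) KL_le KKT.
by split; [exists l11 | exact: cap_Q11].
Qed.
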